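(* Let $F\leq F'\leq\hat F$ be permutation groups on $\Omega$. The following are equivalent: (i) $F=F'$; (ii) $G(F,F')=U(F)$; (iii) $G(F,F')$ is a closed subgroup of $\mathrm{Aut}(\mathcal{T}_d)$; (iv) the vertex stabilizers $G(F,F')_v$ ($v\in V$) are compact in $G(F,F')$.
   Context: Standing notation. $\Omega$ is a finite set with $d=|\Omega|\geq 3$, $\mathcal{T}_d$ is the $d$-regular tree with vertex set $V$ and set $E$ of non-oriented edges, and $\mathrm{Aut}(\mathcal{T}_d)$ carries the permutation topology. Fix a coloring $c:E\to\Omega$ such that for every vertex $v$ its restriction $c_v$ to the set $E(v)$ of edges containing $v$ is a bijection onto $\Omega$. For $g\in\mathrm{Aut}(\mathcal{T}_d)$ and $v\in V$, the local permutation is $\sigma(g,v)=c_{gv}\circ g_v\circ c_v^{-1}\in\mathrm{Sym}(\Omega)$, where $g_v:E(v)\to E(gv)$ is induced by $g$. For $F\leq\mathrm{Sym}(\Omega)$: $U(F)=\{g:\sigma(g,v)\in F \ \forall v\}$; $G(F)=\{g:\sigma(g,v)\in F \text{ for all but finitely many } v\}$; $\hat F$ is the subgroup of permutations preserving each $F$-orbit. For $F\leq F'\leq\hat F$, $G(F,F')=G(F)\cap U(F')$, endowed with the unique group topology for which the inclusion $U(F)\hookrightarrow G(F,F')$ is continuous and open ($U(F)$ with the topology induced from $\mathrm{Aut}(\mathcal{T}_d)$). *)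

From HB Require Import structures.
From mathcomp Require Import all_boot all_fingroup.
Set Implicit Arguments. Unset Strict Implicit. Unset Printing Implicit Defensive.

Section Tree.
Variable Omega : finType.

(* Model of the d-regular tree T_d (d = #|Omega|): vertices are reduced words
   over Omega (no two consecutive equal letters), stored with the most recent
   letter first; vertex w is adjacent to stepw w a for each a in Omega.
   (This is the Cayley graph of the free product of #|Omega| copies of Z/2.) *)
Definition reduced (w : seq Omega) : bool := sorted (fun x y => x != y) w.

Definition stepw (w : seq Omega) (a : Omega) : seq Omega :=
  match w with
  | [::] => [:: a]
  | b :: w' => if b == a then w' else a :: w
  end.

Lemma step_reduced (a : Omega) (w : seq Omega) : reduced w -> reduced (stepw w a).
Proof.
case: w => [|b w] //= H.
case: eqP => [_|Hba]; first exact: path_sorted H.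
by rewrite /reduced /= H andbT; apply/eqP => E; apply: Hba.
Qed.

Definition V := {w : seq Omega | reduced w}.

Definition vstep (v : V) (a : Omega) : V :=
  exist _ (stepw (val v) a) (step_reduced a (valP v)).

Definition adj (u w : V) : Prop := exists a, w = vstep u a.

Definition isAut (g : V -> V) : Prop :=
  bijective g /\ forall u w, adj u w <-> adj (g u) (g w).

(* A non-oriented edge {u,w} is identified with its endpoint farther from the
   root [::]; an edge coloring is thus a map c : V -> Omega (its value at the
   root is irrelevant).  col c u w = color of the edge {u,w}. *)
Definition col (c : V -> Omega) (u w : V) : Omega :=
  if size (val u) < size (val w) then c w else c u.

(* legal coloring: at each vertex v, c_v : E(v) -> Omega is a bijection;
   E(v) = {{v, vstep v a} | a in Omega} is in bijection with Omega via a. *)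
Definition legal (c : V -> Omega) : Prop :=
  forall v, injective (fun a => col c v (vstep v a)).

Definition nbr (c : V -> Omega) (v : V) (b : Omega) : V :=
  vstep v (odflt b [pick a | col c v (vstep v a) == b]).

(* local permutation sigma(g,v) = c_{gv} o g_v o c_v^{-1} *)
Definition sigma (c : V -> Omega) (g : V -> V) (v : V) : Omega -> Omega :=
  fun b => col c (g v) (g (nbr c v b)).

Definition locin (c : V -> Omega) (F : {set {perm Omega}}) (g : V -> V) (v : V) : Prop :=
  exists2 s : {perm Omega}, s \in F & forall b, s b = sigma c g v b.

Definition U (c : V -> Omega) (F : {set {perm Omega}}) (g : V -> V) : Prop :=
  isAut g /\ forall v, locin c F g v.

Definition Gfin (c : V -> Omega) (F : {set {perm Omega}}) (g : V -> V) : Prop :=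
  isAut g /\ exists S : seq V, forall v, ~ locin c F g v -> v \in S.

Definition GFF (c : V -> Omega) (F F' : {set {perm Omega}}) (g : V -> V) : Prop :=
  Gfin c F g /\ U c F' g.

Definition hat (F : {group {perm Omega}}) : {set {perm Omega}} :=
  [set s : {perm Omega} | [forall x, s x \in orbit 'P F x]].

(* closedness in Aut(T_d) for the permutation topology *)
Definition closed_Aut (P : (V -> V) -> Prop) : Prop :=
  forall g, isAut g ->
    (forall S : seq V, exists2 h, P h & forall v, v \in S -> h v = g v) -> P g.

(* open subsets of G(F,F') for the group topology in which U(F) is an open
   subgroup carrying its topology from Aut(T_d): O is open iff for each g in O
   some left translate g U(F)_S of a pointwise stabilizer (S finite) lies in O *)
Definition openG (c : V -> Omega) (F F' : {set {perm Omega}}) (O : (V -> V) -> Prop) : Prop :=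
  (forall g, O g -> GFF c F F' g) /\
  (forall g, O g -> exists S : seq V,
      forall h, U c F h -> (forall s, s \in S -> h s = s) -> O (g \o h)).

Definition compactG (c : V -> Omega) (F F' : {set {perm Omega}}) (K : (V -> V) -> Prop) : Prop :=
  forall C : ((V -> V) -> Prop) -> Prop,
    (forall O, C O -> openG c F F' O) ->
    (forall g, K g -> exists2 O, C O & O g) ->
    exists n (f : nat -> ((V -> V) -> Prop)),
      (forall i, i < n -> C (f i)) /\ (forall g, K g -> exists2 i, i < n & f i g).

Definition stabG (c : V -> Omega) (F F' : {set {perm Omega}}) (v : V) (g : V -> V) : Prop :=
  GFF c F F' g /\ g v = v.

End Tree.

From HB Require Import structures.
From mathcomp Require Import all_boot all_fingroup.
From Stdlib Require Import Classical ClassicalEpsilon FunctionalExtensionality.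
Set Implicit Arguments. Unset Strict Implicit. Unset Printing Implicit Defensive.

(* If F = F', then G(F,F') = U(F) is cut out by conditions on the local
   permutations at single vertices, so it is closed, and its vertex stabilizers
   are compact by König's lemma: a stabilizer has only finitely many
   restrictions to each ball around the fixed vertex.  If s lies in F' but not
   in F, then, since s preserves the F-orbits, for every N there is an
   automorphism whose local permutation is s at every vertex of level < N and
   lies in F at all deeper vertices.  These automorphisms lie in G(F,F') and
   fix the root; they converge to an automorphism with local permutation s
   everywhere, which is not in G(F,F'), and they are not covered by finitely
   many cosets g U(F)_root, since in each such coset the vertices with a local
   permutation outside F stay in a bounded ball. *)

Lemma inj_surj_bij (T1 T2 : Type) (f : T1 -> T2) :
  injective f -> (forall y, exists x, f x = y) -> bijective f.
Proof.
move=> Hi Hs; exists (fun y => proj1_sig (constructive_indefinite_description _ (Hs y))).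
  by move=> x; apply: Hi; case: constructive_indefinite_description.
by move=> y; case: constructive_indefinite_description.
Qed.

Section Tree.
Variable Omega : finType.
Implicit Types (p u v w x y : V Omega) (a b : Omega) (g h : V Omega -> V Omega).

Definition vroot : V Omega := exist _ [::] isT.

Lemma vroot_nil v : val v = [::] -> v = vroot.
Proof. by move=> E; apply: val_inj. Qed.

Lemma vstepK v a : vstep (vstep v a) a = v.
Proof.
apply: val_inj; case: v => -[|b w] //= Hw; first by rewrite eqxx.
case: eqP => [<-|_] /=; last by rewrite eqxx.
by case: w Hw => [|b' w] //= /andP[Hbb' _]; rewrite eq_sym (negbTE Hbb').
Qed.

Lemma vstepP v a : val v = a :: val (vstep v a) \/ val (vstep v a) = a :: val v.
Proof. by case: v => -[|b w] //= _; [right | case: eqP => [<-|_]; [left|right]]. Qed.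

Lemma vstep_parent v a s : val v = a :: s -> val (vstep v a) = s.
Proof. by case: v => r Hr /= E; subst r; rewrite /= eqxx. Qed.

Lemma parentP v a s : val v = a :: s -> exists2 p, val p = s & v = vstep p a.
Proof. by move=> E; exists (vstep v a); rewrite ?vstepK ?(vstep_parent E). Qed.

Lemma child_vstep u p a : val u = a :: val p -> u = vstep p a.
Proof. by case/parentP=> p' /val_inj ->. Qed.

Lemma reduced_head v a b s : val v = a :: b :: s -> a != b.
Proof. by case: v => r Hr /= E; move: Hr; rewrite E => /andP[]. Qed.

Lemma adj_sym u v : adj u v -> adj v u.
Proof. by case=> a ->; exists a; rewrite vstepK. Qed.

Lemma col_child (c : V Omega -> Omega) p u a : val u = a :: val p -> col c p u = c u.
Proof. by move=> E; rewrite /col E /= ltnSn. Qed.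

Lemma col_parent (c : V Omega -> Omega) p u a : val u = a :: val p -> col c u p = c u.
Proof. by move=> E; rewrite /col E /= ltnNge leqnSn. Qed.

Lemma isAut_adj g u v : isAut g -> adj u v -> adj (g u) (g v).
Proof. by case=> _ H /H. Qed.

Lemma isAut_id : isAut (@id (V Omega)).
Proof. by split=> //; exists id. Qed.

Lemma isAut_comp g h : isAut g -> isAut h -> isAut (g \o h).
Proof.
case=> bg Hg [bh Hh]; split; first exact: bij_comp.
by move=> u v; rewrite Hh Hg.
Qed.

Lemma isAut_inv g g' : isAut g -> cancel g g' -> cancel g' g -> isAut g'.
Proof.
case=> _ Hg K1 K2; split; first by exists g.
by move=> u v; rewrite (Hg (g' u)) !K2.
Qed.

Lemma isAut_inverse g : isAut g -> exists2 g', cancel g g' & cancel g' g.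
Proof. by case=> [[g' K1 K2] _]; exists g'. Qed.

Fixpoint ball v n : seq (V Omega) :=
  if n is n'.+1 then ball v n' ++ [seq vstep u a | u <- ball v n', a <- enum Omega]
  else [:: v].

Lemma ball_center v : v \in ball v 0.
Proof. by rewrite inE. Qed.

Lemma ball_subS v n : {subset ball v n <= ball v n.+1}.
Proof. by move=> x Hx /=; rewrite mem_cat Hx. Qed.

Lemma ball_sub v n m : n <= m -> {subset ball v n <= ball v m}.
Proof.
move=> /subnK <-; elim: (m - n) => [//|k IH] x /IH Hx.
by rewrite addSn; apply: ball_subS.
Qed.

Lemma ball_vstep v n x a : x \in ball v n -> vstep x a \in ball v n.+1.
Proof. by move=> Hx /=; rewrite mem_cat allpairs_f ?orbT ?mem_enum. Qed.

Lemma ball_adj v n x y : adj x y -> x \in ball v n -> y \in ball v n.+1.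
Proof. by case=> a ->; apply: ball_vstep. Qed.

Lemma ballSP v n x : x \in ball v n.+1 ->
  x \in ball v n \/ exists2 u, u \in ball v n & exists a, x = vstep u a.
Proof.
rewrite /= mem_cat => /orP[|/allpairsP[[u a] [/= Hu _ ->]]]; first by left.
by right; exists u => //; exists a.
Qed.

Lemma ball_trans v u n m w : u \in ball v n -> w \in ball u m -> w \in ball v (n + m).
Proof.
move=> Hu; elim: m w => [|m IH] w; first by rewrite addn0 inE => /eqP ->.
by rewrite addnS; case/ballSP => [/IH/ball_subS|[x /IH Hx [a ->]]] //; apply: ball_vstep.
Qed.

Lemma ball_vroot_size x : x \in ball vroot (size (val x)) /\ vroot \in ball x (size (val x)).
Proof.
move: {2}(size (val x)) (erefl (size (val x))) => n; elim: n x => [|n IH] x.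
  by move/size0nil/vroot_nil ->; rewrite ball_center.
case Ex: (val x) => [//|a s] [Hs]; have [p Hp Exp] := parentP Ex.
have [H1 H2] := IH p (etrans (f_equal size Hp) Hs); rewrite Hp Hs in H1 H2.
have -> : size (a :: s) = n.+1 by rewrite /= Hs.
rewrite Exp; split; first exact: ball_vstep H1.
by rewrite -add1n; apply: ball_trans H2; apply/ball_adj/ball_center; exists a; rewrite vstepK.
Qed.

Lemma ball_size_mem v x : x \in ball v (size (val v) + size (val x)).
Proof.
have [_ H1] := ball_vroot_size v; have [H2 _] := ball_vroot_size x.
exact: ball_trans H1 H2.
Qed.

Lemma size_ball_vroot m x : x \in ball vroot m -> size (val x) <= m.
Proof.
elim: m x => [|m IH] x; first by rewrite inE => /eqP ->.
case/ballSP => [/IH/leqW //|[u /IH Hu [a ->]]].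
case: (vstepP u a) => E; [rewrite E in Hu | rewrite E]; rewrite /= in Hu *.
  exact/leqW/ltnW.
by rewrite ltnS.
Qed.

Lemma ball_isAut g v n x : isAut g -> x \in ball v n -> g x \in ball (g v) n.
Proof.
move=> Hg; elim: n x => [|n IH] x; first by rewrite !inE => /eqP ->.
case/ballSP => [/IH/ball_subS //|[u /IH Hu [a ->]]].
by apply: ball_adj Hu; apply: isAut_adj Hg _; exists a.
Qed.

Lemma ball_cover v (S : seq (V Omega)) : exists n, {subset S <= ball v n}.
Proof.
elim: S => [|x S [n Hn]]; first by exists 0.
exists (maxn n (size (val v) + size (val x))) => y; rewrite inE => /orP[/eqP ->|/Hn Hy].
  exact/(ball_sub (leq_maxr _ _))/ball_size_mem.
exact: ball_sub (leq_maxl _ _) _ Hy.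
Qed.

Section Coloring.
Variable c : V Omega -> Omega.
Hypothesis Hc : legal c.

Lemma col_surj v b : exists a, col c v (vstep v a) = b.
Proof. by have [f _ fK] := injF_bij (@Hc v); exists (f b); rewrite fK. Qed.

Lemma nbr_vstep v b : exists a, nbr c v b = vstep v a.
Proof. by eexists. Qed.

Lemma nbrP v b : col c v (nbr c v b) = b.
Proof.
rewrite /nbr; case: pickP => [a /eqP //|Hno].
by have [a Ha] := col_surj v b; move: (Hno a); rewrite Ha eqxx.
Qed.

Lemma nbr_adj v b : adj v (nbr c v b).
Proof. by exists (odflt b [pick a | col c v (vstep v a) == b]). Qed.

Lemma nbr_col v w : adj v w -> nbr c v (col c v w) = w.
Proof.
case=> a ->; have [a' E] := nbr_vstep v (col c v (vstep v a)).
by have := nbrP v (col c v (vstep v a)); rewrite E => /Hc ->.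
Qed.

Lemma nbr_inj v : injective (nbr c v).
Proof. by move=> b b' E; rewrite -(nbrP v b) E nbrP. Qed.

Lemma child_col_inj p u w a b : val u = a :: val p -> val w = b :: val p ->
  c u = c w -> u = w.
Proof.
move=> Eu Ew Ecol; rewrite (child_vstep Eu) (child_vstep Ew); congr vstep; apply: (@Hc p) => /=.
by rewrite -(child_vstep Eu) -(child_vstep Ew) (col_child c Eu) (col_child c Ew).
Qed.

Lemma child_col_neq p u a : val u = a :: val p -> val p <> [::] -> c u <> c p.
Proof.
move=> Eu; case Ep: (val p) => [//|b s] _ Ecol.
have Hpar : val p = b :: val (vstep p b) by rewrite (vstep_parent Ep).
have Eab : a = b.
  apply: (@Hc p) => /=.
  by rewrite -(child_vstep Eu) (col_child c Eu) (col_parent c Hpar) Ecol.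
by move: (reduced_head (etrans Eu (congr1 (cons a) Ep))); rewrite Eab eqxx.
Qed.

Lemma sigma_comp g h u b : isAut h ->
  sigma c (g \o h) u b = sigma c g (h u) (sigma c h u b).
Proof. by move=> Hh; rewrite /sigma /= nbr_col //; apply/(isAut_adj Hh)/nbr_adj. Qed.

Lemma sigma_id u b : sigma c id u b = b.
Proof. exact: nbrP. Qed.

Lemma sigma_inv g g' u b : isAut g -> cancel g g' -> cancel g' g ->
  sigma c g (g' u) (sigma c g' u b) = b.
Proof.
move=> Hg K1 K2; rewrite -sigma_comp; last exact: isAut_inv Hg K1 K2.
by rewrite /sigma /comp !K2 nbrP.
Qed.

Lemma eq_sigma g g' u : g u = g' u -> (forall b, g (nbr c u b) = g' (nbr c u b)) ->
  forall b, sigma c g u b = sigma c g' u b.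
Proof. by move=> E1 E2 b; rewrite /sigma E1 E2. Qed.

Lemma locin_sub (F F' : {set {perm Omega}}) g u :
  F \subset F' -> locin c F g u -> locin c F' g u.
Proof. by move=> /subsetP HF [s Hs Es]; exists s; first exact: HF. Qed.

Lemma U_sub (F F' : {set {perm Omega}}) g : F \subset F' -> U c F g -> U c F' g.
Proof. by move=> HF [Ha Hl]; split=> // v; apply: locin_sub HF _. Qed.

Variable F : {group {perm Omega}}.

Lemma locin_comp g h u : isAut h -> locin c F g (h u) -> locin c F h u ->
  locin c F (g \o h) u.
Proof.
move=> Hh [t Ht Et] [s Hs Es]; exists (s * t)%g; first by rewrite groupM.
by move=> b; rewrite permM Es Et sigma_comp.
Qed.

Lemma U_id : U c F id.
Proof.
split=> [|u]; first exact: isAut_id.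
by exists 1%g => [|b]; rewrite ?group1 // perm1 sigma_id.
Qed.

Lemma U_comp g h : U c F g -> U c F h -> U c F (g \o h).
Proof. by move=> [Hg Lg] [Hh Lh]; split=> [|v]; [exact: isAut_comp | apply: locin_comp]. Qed.

Lemma U_inv g g' : U c F g -> cancel g g' -> cancel g' g -> U c F g'.
Proof.
move=> [Hg Lg] K1 K2; split=> [|u]; first exact: isAut_inv Hg K1 K2.
have [t Ht Et] := Lg (g' u); exists t^-1%g; first by rewrite groupV.
by move=> b; apply: (@perm_inj _ t); rewrite permKV Et sigma_inv.
Qed.

Lemma Gfin_U g : U c F g -> Gfin c F g.
Proof. by move=> [Hg Lg]; split=> //; exists [::] => v /(_ (Lg v)). Qed.

End Coloring.

Lemma GFF_compU (c : V Omega -> Omega) (F F' : {group {perm Omega}}) g h :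
  legal c -> F \subset F' ->
  GFF c F F' g -> U c F h -> GFF c F F' (g \o h).
Proof.
move=> Hc HF [[Hg [S HS]] Ug] Uh; split; last by apply: (U_comp Hc) Ug _; apply: U_sub HF Uh.
have [Hh _] := Uh; have [h' K1 _] := isAut_inverse Hh.
split; first exact: isAut_comp.
exists (map h' S) => v Hv; rewrite -[v]K1; apply/map_f/HS => Hl.
by apply/Hv/(locin_comp Hc); last by case: Uh.
Qed.

Lemma closed_Aut_U (c : V Omega -> Omega) (F : {set {perm Omega}}) : closed_Aut (U c F).
Proof.
move=> g Hg Happ; split=> // v.
have [h [_ Lh] Eh] := Happ (v :: [seq nbr c v b | b <- enum Omega]).
have [t Ht Et] := Lh v; exists t => // b.
by rewrite Et /sigma !Eh ?mem_head // inE map_f ?orbT ?mem_enum.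
Qed.

Lemma closed_Aut_equiv (P Q : (V Omega -> V Omega) -> Prop) :
  (forall g, P g <-> Q g) -> closed_Aut Q -> closed_Aut P.
Proof.
move=> PQ HQ g Hg Happ; apply/PQ/HQ => // S.
by have [h /PQ Hh Eh] := Happ S; exists h.
Qed.

Section Extension.
Variable c : V Omega -> Omega.
Hypothesis Hc : legal c.
Variable t : nat -> Omega -> Omega -> {perm Omega}.
(* The permutation chosen at a child must send the colour of the edge to its
   parent to the colour of the image of that edge. *)
Hypothesis t_coherent : forall n (x y z : Omega), t n.+1 z (t n x y z) z = t n x y z.

Definition toV (s : seq Omega) : V Omega := insubd vroot s.

(* The image of the child [a :: s] of [s] is the neighbour of the image of [s]
   along the edge of colour [t n x y (c (a :: s))], where [n = size s],
   [x = c s] and [y] is the colour of the image of [s]; the permutation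
   [t n x y] thus becomes the local permutation at [s]. *)
Fixpoint ext_word (s : seq Omega) : V Omega :=
  if s is a :: s' then
    nbr c (ext_word s') (t (size s') (c (toV s')) (c (ext_word s')) (c (toV (a :: s'))))
  else vroot.

Definition ext u := ext_word (val u).
Definition ext_perm u := t (size (val u)) (c u) (c (ext u)).

Lemma ext_rec u p a : val u = a :: val p -> ext u = nbr c (ext p) (ext_perm p (c u)).
Proof. by move=> E; rewrite /ext E /= /ext_perm /toV valKd -E valKd. Qed.

Lemma ext_step u p a : val u = a :: val p ->
  (val p <> [::] -> ext_perm p (c p) = c (ext p)) ->
  (exists e, val (ext u) = e :: val (ext p)) /\ ext_perm u (c u) = c (ext u).
Proof.
move=> Eu IHp; have Erec := ext_rec Eu.
have [e Ee] := nbr_vstep c (ext p) (ext_perm p (c u)).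
have Hcol : col c (ext p) (ext u) = ext_perm p (c u) by rewrite Erec nbrP.
have Hup : val (ext u) = e :: val (ext p).
  rewrite Erec Ee; case: (vstepP (ext p) e) => // Hd; exfalso.
  have Hp : val p <> [::] by move=> /vroot_nil Ep; move: Hd; rewrite Ep.
  apply: (child_col_neq Hc Eu Hp); apply: (@perm_inj _ (ext_perm p)).
  by rewrite IHp // -Hcol Erec Ee (col_parent c Hd).
split; first by exists e.
have Hcu : c (ext u) = ext_perm p (c u).
  by rewrite -Hcol (col_child c Hup).
by rewrite {1}/ext_perm Eu /= Hcu /ext_perm t_coherent.
Qed.

Lemma ext_perm_col u : val u <> [::] -> ext_perm u (c u) = c (ext u).
Proof.
move: {2}(size (val u)) (erefl (size (val u))) => n.
elim: n u => [|n IH] u; first by move/size0nil.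
case Eu: (val u) => [//|a s] [Hs] _; have [p Hp _] := parentP Eu.
have Hsp : size (val p) = n by rewrite Hp.
by rewrite -Hp in Eu; have [] := ext_step Eu (IH p Hsp).
Qed.

Lemma ext_child u p a : val u = a :: val p -> exists e, val (ext u) = e :: val (ext p).
Proof. by move=> E; have [] := ext_step E (@ext_perm_col p). Qed.

Lemma ext_size u : size (val (ext u)) = size (val u).
Proof.
move: {2}(size (val u)) (erefl (size (val u))) => n.
elim: n u => [|n IH] u; first by move/size0nil/vroot_nil ->.
case Eu: (val u) => [//|a s] [Hs]; have [p Hp _] := parentP Eu.
rewrite -Hp in Eu; have [e ->] := ext_child Eu.
by rewrite /= IH // Hp.
Qed.

Lemma ext_child_vstep u p a : val u = a :: val p -> exists2 e,
  val (ext u) = e :: val (ext p) & ext u = vstep (ext p) e.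
Proof. by case/ext_child=> e E; exists e => //; apply: child_vstep. Qed.

Lemma ext_inj : injective ext.
Proof.
move=> u w; move: {2}(size (val u)) (erefl (size (val u))) => n.
elim: n u w => [|n IH] u w Hu E.
  have Hw : size (val w) = 0 by rewrite -ext_size -E ext_size.
  by rewrite (vroot_nil (size0nil Hu)) (vroot_nil (size0nil Hw)).
have Hw : size (val w) = n.+1 by rewrite -ext_size -E ext_size.
case Eu: (val u) Hu => [//|a su] [Hu]; have [pu Hpu _] := parentP Eu.
case Ew: (val w) Hw => [//|b sw] [Hw]; have [pw Hpw _] := parentP Ew.
rewrite -Hpu in Eu; rewrite -Hpw in Ew.
have [e He _] := ext_child_vstep Eu; have [e' He' _] := ext_child_vstep Ew.
have Ep : pu = pw.
  by apply: IH; [rewrite Hpu | apply: val_inj; move: He; rewrite E He' => -[]].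
subst pw; move: E; rewrite (ext_rec Eu) (ext_rec Ew) => /(nbr_inj Hc)/perm_inj.
exact: (child_col_inj Hc Eu Ew).
Qed.

Lemma ext_surj y : exists x, ext x = y.
Proof.
move: {2}(size (val y)) (erefl (size (val y))) => n.
elim: n y => [|n IH] y Hy; first by exists vroot; rewrite (vroot_nil (size0nil Hy)).
case Ey: (val y) Hy => [//|e sy] [Hy]; have [q Hq _] := parentP Ey.
rewrite -Hq in Ey; have [x' Hx'] := IH q (etrans (f_equal size Hq) Hy).
have [a Ha] := col_surj Hc x' ((ext_perm x')^-1%g (c y)).
case: (vstepP x' a) => [Hd|Hup].
  have Hx'0 : val x' <> [::] by rewrite Hd.
  have Hq0 : val q <> [::] by move/(f_equal size); rewrite -Hx' ext_size Hd.
  exfalso; apply: (child_col_neq Hc Ey Hq0).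
  by rewrite -Hx' -ext_perm_col // -(col_parent c Hd) Ha permKV.
exists (vstep x' a); rewrite (ext_rec Hup) Hx' -(col_child c Hup) Ha permKV.
by rewrite -(col_child c Ey) (nbr_col Hc) //; exists e; apply: child_vstep Ey.
Qed.

Lemma ext_adj_up u w e : val (ext w) = e :: val (ext u) -> adj u w.
Proof.
move=> E; have : size (val w) = (size (val u)).+1 by rewrite -(ext_size w) -(ext_size u) E.
case Ew: (val w) => [//|b sw] _; have [p Hp Ewp] := parentP Ew.
rewrite -Hp in Ew; have [e' He' _] := ext_child_vstep Ew.
rewrite Ewp; have -> : p = u by apply/ext_inj/val_inj; move: E; rewrite He' => -[].
by exists b.
Qed.

Lemma ext_isAut : isAut ext.
Proof.
split; first exact: inj_surj_bij ext_inj ext_surj.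
move=> u w; split.
  case=> a ->; case: (vstepP u a) => [Hd|Hup].
    by have [e _ ->] := ext_child_vstep Hd; apply: adj_sym; exists e.
  by have [e _ ->] := ext_child_vstep Hup; exists e.
case=> e Ee; case: (vstepP (ext u) e) => [Hd|Hup].
  by apply/adj_sym/(@ext_adj_up w u e); rewrite Ee.
by apply: (@ext_adj_up u w e); rewrite Ee.
Qed.

Lemma sigma_ext u b : sigma c ext u b = ext_perm u b.
Proof.
have [e Ee] := nbr_vstep c u b; have Hb := nbrP Hc u b.
rewrite /sigma Ee; rewrite Ee in Hb; case: (vstepP u e) => [Hd|Hup].
  have [e' He' Ee'] := ext_child_vstep Hd.
  rewrite -Hb (col_parent c Hd) ext_perm_col; last by rewrite Hd.
  by rewrite (col_parent c He').
by rewrite (ext_rec Hup) (nbrP Hc) -Hb (col_child c Hup).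
Qed.

End Extension.

Lemma ext_word_agree c (t1 t2 : nat -> Omega -> Omega -> {perm Omega}) N s :
  (forall k, k < N -> t1 k = t2 k) -> size s <= N -> ext_word c t1 s = ext_word c t2 s.
Proof.
move=> Et; elim: s => [//|a s IH] /= Hs.
by rewrite IH ?(ltnW Hs) // Et.
Qed.

Section Twist.
Variable c : V Omega -> Omega.
Hypothesis Hc : legal c.
Variable F : {group {perm Omega}}.
Variable s : {perm Omega}.
Hypothesis s_hat : s \in hat F.
Variable low : pred nat.
Hypothesis lowS : forall n, low n.+1 -> low n.

(* On the levels in [low] the local permutation is [s]; below them an element
   of [F] repairs the colours, which is possible because [s] preserves the
   [F]-orbits. *)
Definition twist_perm n (x y : Omega) : {perm Omega} :=
  if low n then s else odflt 1%g [pick f in F | f x == y].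

Lemma twist_perm_orbit n (x y z : Omega) : twist_perm n x y z \in orbit 'P F z.
Proof.
rewrite /twist_perm; case: ifP => _; first by move: s_hat; rewrite inE => /forallP/(_ z).
by case: pickP => [f /andP[Hf _]|_] /=; apply/orbitP; [exists f | exists 1%g].
Qed.

Lemma twist_perm_coherent n (x y z : Omega) :
  twist_perm n.+1 z (twist_perm n x y z) z = twist_perm n x y z.
Proof.
rewrite {1}/twist_perm; case: ifP => [/lowS Hn|_]; first by rewrite /twist_perm Hn.
case: pickP => [f /andP[_ /eqP] //|Hno].
by have /orbitP[f Hf Ef] := twist_perm_orbit n x y z; move: (Hno f); rewrite Hf -Ef eqxx.
Qed.

Definition twisted := ext c twist_perm.

Lemma twisted_isAut : isAut twisted.
Proof. exact: (ext_isAut Hc (@twist_perm_coherent)). Qed.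

Lemma sigma_twisted u b :
  sigma c twisted u b = twist_perm (size (val u)) (c u) (c (twisted u)) b.
Proof. exact: (sigma_ext Hc (@twist_perm_coherent)). Qed.

Lemma locin_twisted u : ~~ low (size (val u)) -> locin c F twisted u.
Proof.
move=> /negbTE Hl; exists (twist_perm (size (val u)) (c u) (c (twisted u))).
  by rewrite /twist_perm Hl; case: pickP => [f /andP[]|] //=; rewrite group1.
by move=> b; rewrite sigma_twisted.
Qed.

Lemma not_locin_twisted u : low (size (val u)) -> s \notin F -> ~ locin c F twisted u.
Proof.
move=> Hl sF [t Ht Et]; move: sF; suff -> : s = t by rewrite Ht.
by apply/permP => b; rewrite Et sigma_twisted /twist_perm Hl.
Qed.

Lemma U_twisted (F' : {group {perm Omega}}) : F \subset F' -> s \in F' -> U c F' twisted.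
Proof.
move=> HF sF'; split=> [|u]; first exact: twisted_isAut.
exists (twist_perm (size (val u)) (c u) (c (twisted u))); last by move=> b; rewrite sigma_twisted.
rewrite /twist_perm; case: ifP => // _.
by case: pickP => [f /andP[Hf _]|_] /=; rewrite ?group1 ?(subsetP HF).
Qed.

End Twist.

Lemma exists_level : 1 < #|Omega| -> forall n, exists u : V Omega, size (val u) = n.
Proof.
move=> /card_gt1P[a [b [_ _ Hab]]]; elim=> [|n [u Hu]]; first by exists vroot.
have [x Hx] : exists x : Omega, if val u is h :: _ then x != h else true.
  case: (val u) => [|h _]; first by exists a.
  by case: (eqVneq a h) => [<-|]; [exists b; rewrite eq_sym | exists a].
exists (vstep u x); case: (vstepP u x) => [Hd|->]; last by rewrite /= Hu.
by move: Hx; rewrite Hd eqxx.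
Qed.

End Tree.

Arguments vroot {Omega}.

Section FiniteCovers.
Variable T : Type.
Variable C : (T -> Prop) -> Prop.

Definition finitely_covered (P : T -> Prop) :=
  exists n (f : nat -> (T -> Prop)),
    (forall i, i < n -> C (f i)) /\ (forall g, P g -> exists2 i, i < n & f i g).

Lemma finitely_covered_sub (P Q : T -> Prop) :
  (forall g, P g -> Q g) -> finitely_covered Q -> finitely_covered P.
Proof. by move=> H [n [f [Hf HQ]]]; exists n, f; split=> // g /H /HQ. Qed.

Lemma finitely_covered0 (P : T -> Prop) : (forall g, ~ P g) -> finitely_covered P.
Proof. by move=> H; exists 0, (fun _ => P); split=> // g /H. Qed.

Lemma finitely_coveredU (P Q : T -> Prop) :
  finitely_covered P -> finitely_covered Q -> finitely_covered (fun g => P g \/ Q g).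
Proof.
move=> [n1 [f1 [Hf1 HP]]] [n2 [f2 [Hf2 HQ]]].
exists (n1 + n2), (fun i => if i < n1 then f1 i else f2 (i - n1)); split.
  move=> i Hi; case: ifP => H; first exact: Hf1.
  by apply: Hf2; rewrite ltn_subLR // leqNgt H.
move=> g [/HP [i Hi Hfi]|/HQ [i Hi Hfi]].
  by exists i; [exact: leq_trans Hi (leq_addr _ _) | rewrite Hi].
by exists (n1 + i); rewrite ?ltn_add2l // ltnNge leq_addr /= addKn.
Qed.

Lemma finitely_covered_big (I : eqType) (r : seq I) (P : I -> T -> Prop) :
  (forall i, i \in r -> finitely_covered (P i)) ->
  finitely_covered (fun g => exists2 i, i \in r & P i g).
Proof.
elim: r => [|i r IH] H; first by apply: finitely_covered0 => g [].
apply: (@finitely_covered_sub _ (fun g => P i g \/ exists2 j, j \in r & P j g)).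
  by move=> g [j]; rewrite inE => /orP[/eqP -> Hg|Hj Hg]; [left | right; exists j].
apply: finitely_coveredU; first by apply: H; rewrite mem_head.
by apply: IH => j Hj; apply: H; rewrite inE Hj orbT.
Qed.

End FiniteCovers.

Lemma exists_uniform_bound n (P : nat -> nat -> Prop) :
  (forall i M M', M <= M' -> P i M -> P i M') ->
  (forall i, i < n -> exists M, P i M) -> exists M, forall i, i < n -> P i M.
Proof.
move=> Pmono; elim: n => [|n IH] H; first by exists 0.
have [M HM] := IH (fun i Hi => H i (ltnW Hi)); have [M' HM'] := H n (ltnSn n).
exists (maxn M M') => i; rewrite ltnS leq_eqVlt => /orP[/eqP ->|Hi].
  exact: Pmono (leq_maxr _ _) HM'.
exact: Pmono (leq_maxl _ _) (HM i Hi).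
Qed.

Fixpoint words (T : Type) (B : seq T) m : seq (seq T) :=
  if m is m'.+1 then [seq x :: r | x <- B, r <- words B m'] else [:: [::]].

Lemma mem_words (T : eqType) (B r : seq T) : all (mem B) r -> r \in words B (size r).
Proof.
elim: r => [|x r IH] /=; first by rewrite inE.
by move=> /andP[Hx Hr]; apply: (allpairs_f (fun x r => x :: r)) => //; apply: IH.
Qed.

Section StabilizerCompact.
Variable Omega : finType.
Variable c : V Omega -> Omega.
Hypothesis Hc : legal c.
Variable F : {group {perm Omega}}.
Variable v : V Omega.
Variable C : ((V Omega -> V Omega) -> Prop) -> Prop.
Hypothesis C_open : forall O, C O -> forall g, O g -> exists S : seq (V Omega),
  forall h, U c F h -> (forall x, x \in S -> h x = x) -> O (g \o h).

Let K g := U c F g /\ g v = v.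
Let covered := finitely_covered C.

Definition cylinder k n g := K g /\ {in ball v n, g =1 k}.

Lemma K_id : K id.
Proof. by split; first exact: U_id. Qed.

Lemma K_ball g n x : K g -> x \in ball v n -> g x \in ball v n.
Proof. by move=> [[Hg _] gv] /(ball_isAut Hg); rewrite gv. Qed.

(* Elements of [K] agreeing on [ball v n] differ on [ball v n.+1] in only
   finitely many ways, as [K] preserves that ball. *)
Lemma cylinder_refine k n : ~ covered (cylinder k n) ->
  exists k', cylinder k n k' /\ ~ covered (cylinder k' n.+1).
Proof.
move=> Hk; apply: NNPP => Hno; apply: Hk.
pose B := ball v n.+1.
apply: (finitely_covered_sub (Q := fun g => exists2 r, r \in words B (size B) &
   cylinder k n g /\ map g B = r)).
  move=> g Hg; exists (map g B) => //; rewrite -(size_map g); apply: mem_words.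
  by apply/allP => y /mapP[x Hx ->]; apply: K_ball Hx; case: Hg.
apply: finitely_covered_big => r _.
case: (classic (exists k', cylinder k n k' /\ map k' B = r)) => [[k' [Hk' Er]]|Hr].
  have : covered (cylinder k' n.+1) by apply: NNPP => Hk'n; apply: Hno; exists k'.
  apply: finitely_covered_sub => g [[Kg _] Eg]; split=> // x Hx.
  by move: Eg; rewrite -Er => /eq_in_map; apply.
by apply: finitely_covered0 => g Hg; apply: Hr; exists g.
Qed.

Definition refine k n := epsilon (inhabits id)
  (fun k' => cylinder k n k' /\ ~ covered (cylinder k' n.+1)).

Fixpoint approx n := if n is n'.+1 then refine (approx n') n' else id.

Section Limit.
Hypothesis K_not_covered : ~ covered K.

Lemma approx_spec n :
  K (approx n) /\ ~ covered (cylinder (approx n) n) /\ cylinder (approx n) n (approx n.+1).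
Proof.
have refineP k m : ~ covered (cylinder k m) ->
    cylinder k m (refine k m) /\ ~ covered (cylinder (refine k m) m.+1).
  by move=> Hkm; apply: (epsilon_spec (inhabits id) _ (cylinder_refine Hkm)).
have H0 : ~ covered (cylinder id 0).
  move=> Hcov; apply: K_not_covered; apply: finitely_covered_sub Hcov => g Kg.
  by split=> // x; rewrite inE => /eqP ->; case: Kg.
elim: n => [|n [_ [Hn _]]]; first by split; [exact: K_id | split; [|case: (refineP _ _ H0)]].
have [[Kn _] Hn1] := refineP _ _ Hn.
by split=> //; split=> //; case: (refineP _ _ Hn1).
Qed.

Lemma approx_agree n m x : n <= m -> x \in ball v n -> approx m x = approx n x.
Proof.
move=> /subnK <-; elim: (m - n) => [//|j IH] Hx.
have [_ [_ [_ Ej]]] := approx_spec (j + n).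
by rewrite addSn Ej ?IH //; apply: ball_sub (leq_addl _ _) _ Hx.
Qed.

Definition limit x := approx (size (val v) + size (val x)) x.

Lemma limit_approx n x : x \in ball v n -> limit x = approx n x.
Proof.
move=> Hx; rewrite /limit -(@approx_agree _ (maxn n (size (val v) + size (val x)))) ?leq_maxr //.
  exact: approx_agree (leq_maxl _ _) Hx.
exact: ball_size_mem.
Qed.

Lemma limit_approx2 x y : exists n, limit x = approx n x /\ limit y = approx n y.
Proof.
exists (maxn (size (val v) + size (val x)) (size (val v) + size (val y))).
by split; apply: limit_approx; apply: (ball_sub _ (ball_size_mem _ _)); rewrite ?leq_maxl ?leq_maxr.
Qed.

Lemma approx_isAut n : isAut (approx n).
Proof. by have [[[]]] := approx_spec n. Qed.

Lemma limit_isAut : isAut limit.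
Proof.
split=> [|x y]; last by have [n [-> ->]] := limit_approx2 x y; case: (approx_isAut n).
apply: inj_surj_bij => [x y|y].
  by have [n [-> ->]] := limit_approx2 x y; apply: bij_inj; case: (approx_isAut n).
pose n := size (val v) + size (val y).
have [k' K1 K2] := isAut_inverse (approx_isAut n).
have [[_ Hv] _] := approx_spec n.
have Hy : y \in ball v n by apply: ball_size_mem.
have Hk'y : k' y \in ball v n.
  by have := ball_isAut (isAut_inv (approx_isAut n) K1 K2) Hy; rewrite -{1}Hv K1.
by exists (k' y); rewrite (limit_approx Hk'y) K2.
Qed.

Lemma limit_U : U c F limit.
Proof.
split=> [|u]; first exact: limit_isAut.
pose n := (size (val v) + size (val u)).+1.
have [[[_ L] _] _] := approx_spec n; have [t Ht Et] := L u.
exists t => // b; rewrite Et; symmetry; apply: eq_sigma => [|b'].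
  by apply/limit_approx/ball_subS/ball_size_mem.
by apply/limit_approx/(ball_adj (nbr_adj c u b'))/ball_size_mem.
Qed.

Lemma limit_K : K limit.
Proof. by split; [exact: limit_U | rewrite (@limit_approx 0) ?ball_center]. Qed.

End Limit.

Lemma stabilizer_finitely_covered :
  (forall g, K g -> exists2 O, C O & O g) -> covered K.
Proof.
move=> HK; apply: NNPP => Hnot.
have [O HO Og] := HK _ (limit_K Hnot); have [S HS] := C_open HO Og.
have [N HN] := ball_cover v S; have [_ [HnotN _]] := approx_spec Hnot N.
apply: HnotN; exists 1, (fun _ => O); split=> // k [[Uk _] Ek]; exists 0 => //.
have [l' K1 K2] := isAut_inverse (limit_isAut Hnot).
have -> : k = limit \o (l' \o k) by apply: functional_extensionality => x /=; rewrite K2.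
apply: HS; first exact: (U_comp Hc (U_inv Hc (limit_U Hnot) K1 K2) Uk).
by move=> x Hx /=; rewrite Ek ?HN // -(limit_approx Hnot (HN x Hx)) K1.
Qed.

End StabilizerCompact.

Section Equivalences.
Variable Omega : finType.
Variable c : V Omega -> Omega.
Variables F F' : {group {perm Omega}}.
Hypothesis Hc : legal c.
Hypothesis FF' : F \subset F'.
Hypothesis F'_hat : F' \subset hat F.

Lemma GFF_U_of_eq : F :=: F' -> forall g, GFF c F F' g <-> U c F g.
Proof.
move=> E g; split=> [[_]|HU]; first by rewrite E.
by split; [exact: Gfin_U | rewrite -E].
Qed.

Lemma compact_stab_of_eq : F :=: F' -> forall v, compactG c F F' (stabG c F F' v).
Proof.
move=> E v C C_open HK.
apply: (finitely_covered_sub (Q := fun g => U c F g /\ g v = v)).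
  by move=> g [/(GFF_U_of_eq E g) Ug gv].
apply: (stabilizer_finitely_covered Hc) => [O CO g Og|g [Ug gv]].
  exact: (C_open O CO).2.
by apply: HK; split; first exact/(GFF_U_of_eq E g).
Qed.

Lemma perm_diff_of_neq : ~ F :=: F' -> exists s, [/\ s \in F', s \notin F & s \in hat F].
Proof.
move=> HE; case: (boolP (F' \subset F)) => [H|/subsetPn [s sF' sF]].
  by case: HE; apply/eqP; rewrite eqEsubset FF' H.
by exists s; split=> //; apply: (subsetP F'_hat).
Qed.

Lemma GFF_twisted s : s \in hat F -> s \in F' ->
  forall N, GFF c F F' (twisted c F s (fun n => n < N)).
Proof.
move=> s_hat sF' N; have lowS n : n.+1 < N -> n < N by apply: ltnW.
split; last exact: (U_twisted (low := fun n => n < N) Hc s_hat lowS FF' sF').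
split; first exact: (twisted_isAut (low := fun n => n < N) Hc s_hat lowS).
exists (ball vroot N) => u Hu; case: (ltnP (size (val u)) N) => Hl.
  by have [Hr _] := ball_vroot_size u; apply: ball_sub Hr; apply: ltnW.
by case: Hu; apply: (locin_twisted (low := fun n => n < N) Hc s_hat lowS); rewrite -leqNgt.
Qed.

Lemma eq_of_closed_Aut : 1 < #|Omega| -> closed_Aut (GFF c F F') -> F :=: F'.
Proof.
move=> Hd Hcl; apply: NNPP => HE; have [s [sF' sF s_hat]] := perm_diff_of_neq HE.
have lowT n : predT n.+1 -> predT n by [].
have [[_ [S HS]] _] : GFF c F F' (twisted c F s predT).
  apply: Hcl; first exact: (twisted_isAut Hc s_hat lowT).
  move=> S; have [N HN] := ball_cover vroot S.
  exists (twisted c F s (fun n => n < N.+1)); first exact: GFF_twisted.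
  move=> x Hx; apply: (@ext_word_agree _ _ _ _ N.+1) => [k Hk|].
    by rewrite /twist_perm Hk.
  exact/leqW/size_ball_vroot/HN.
have [N HN] := ball_cover vroot S; have [u Hu] := exists_level Hd N.+1.
have := size_ball_vroot (HN u (HS u (not_locin_twisted Hc s_hat lowT isT sF))).
by rewrite Hu ltnn.
Qed.

Lemma nonlocin_in_ball_comp M g h : U c F h -> h vroot = vroot ->
  (forall u, ~ locin c F g u -> u \in ball vroot M) ->
  forall u, ~ locin c F (g \o h) u -> u \in ball vroot M.
Proof.
move=> [Hh Lh] hr Hg u Hu; have [h' K1 K2] := isAut_inverse Hh.
have h'r : h' vroot = vroot by rewrite -{1}hr K1.
have Hhu : h u \in ball vroot M by apply: Hg => Hl; apply/Hu/(locin_comp Hc Hh Hl (Lh u)).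
by have := ball_isAut (isAut_inv Hh K1 K2) Hhu; rewrite K1 h'r.
Qed.

Lemma eq_of_compact_stab : 1 < #|Omega| ->
  (forall v, compactG c F F' (stabG c F F' v)) -> F :=: F'.
Proof.
move=> Hd Hcomp; apply: NNPP => HE; have [s [sF' sF s_hat]] := perm_diff_of_neq HE.
pose coset (g k : V Omega -> V Omega) := exists2 h, U c F h /\ h vroot = vroot & k = g \o h.
pose C (O : (V Omega -> V Omega) -> Prop) := exists2 g, stabG c F F' vroot g & O = coset g.
have C_open O : C O -> openG c F F' O.
  move=> [g [Hg _] ->]; split=> [_ [h [Uh _] ->]|_ [h [Uh hr] ->]].
    exact: GFF_compU Hc FF' Hg Uh.
  exists [:: vroot] => h' Uh' Hh'; exists (h \o h') => //.
  by split; [exact: (U_comp Hc Uh Uh') | rewrite /= Hh' ?mem_head].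
have C_cover k : stabG c F F' vroot k -> exists2 O, C O & O k.
  by move=> Hk; exists (coset k); [exists k | exists id; [split; [exact: U_id|]|]].
have [n [f [Hf Hcov]]] := Hcomp vroot C C_open C_cover.
have [M HM] : exists M, forall i, i < n -> forall k, f i k ->
    forall u, ~ locin c F k u -> u \in ball vroot M.
  apply: exists_uniform_bound => [i M M' le H k Hk u Hu|i Hi].
    exact: ball_sub le _ (H k Hk u Hu).
  have [g [[[_ [S HS]] _] _] ->] := Hf i Hi; have [M HMS] := ball_cover vroot S.
  by exists M => _ [h [Uh hr] ->]; apply: nonlocin_in_ball_comp Uh hr _ => u /HS /HMS.
have lowS m : m.+1 < M.+2 -> m < M.+2 by apply: ltnW.
have [i Hi Hfi] := Hcov _ (conj (GFF_twisted s_hat sF' M.+2) (erefl vroot)).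
have [u Hu] := exists_level Hd M.+1.
have Hnot : ~ locin c F (twisted c F s (fun m => m < M.+2)) u.
  by apply: (not_locin_twisted (low := fun m => m < M.+2) Hc s_hat lowS _ sF); rewrite Hu.
by have := size_ball_vroot (HM i Hi _ Hfi u Hnot); rewrite Hu ltnn.
Qed.

End Equivalences.

Theorem mainTheorem15 (Omega : finType) (c : V Omega -> Omega)
    (F F' : {group {perm Omega}}) :
  2 < #|Omega| -> legal c ->
  F \subset F' -> F' \subset hat F ->
  [<-> F :=: F';
       (forall g, GFF c F F' g <-> U c F g);
       closed_Aut (GFF c F F');
       (forall v : V Omega, compactG c F F' (stabG c F F' v))].
Proof.
move=> /ltnW Hd Hc FF' F'_hat.
tfae=> [E|E|Hcl|Hcomp].
- exact: GFF_U_of_eq.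
- exact: closed_Aut_equiv E (@closed_Aut_U _ c F).
- exact: compact_stab_of_eq Hc (eq_of_closed_Aut Hc FF' F'_hat Hd Hcl).
- exact: eq_of_compact_stab Hc FF' F'_hat Hd Hcomp.
Qed.
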